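(* For each positive integer $m$, with $L=\tfrac13(4^m-1)$, there are infinitely many indices $i\ge0$ such that $c_i=c_{i+1}=\cdots=c_{i+L-1}=0$. In particular, the sequence $(c_n)_{n\ge0}$ contains arbitrarily long blocks of consecutive $0$'s.
   Context: For $n\in\mathbb{N}$ let $s_2(n)$ be the sum of the binary digits of $n$ and $t_n=s_2(n)\bmod 2$ (the Prouhet–Thue–Morse sequence). Let $F(X)=\sum_{n\ge1}t_nX^n\in\mathbb{F}_2[[X]]$ and let $G(X)=\sum_{n\ge1}c_nX^n\in\mathbb{F}_2[[X]]$ be its compositional inverse, i.e. $F(G(X))=G(F(X))=X$; set $c_0=0$. The $c_n$ are identified with integers in $\{0,1\}$. *)

From HB Require Import structures.
From mathcomp Require Import all_boot all_algebra.
Set Implicit Arguments. Unset Strict Implicit. Unset Printing Implicit Defensive.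
Import GRing.Theory.
Local Open Scope ring_scope.

(* s_2(n): sum of binary digits of n (fuel n suffices since n %/ 2 < n for n > 0) *)
Fixpoint s2_aux (fuel n : nat) : nat :=
  if fuel is f.+1 then ((n %% 2) + s2_aux f (n %/ 2))%N else 0%N.
Definition s2 (n : nat) : nat := s2_aux n n.

Definition tm (n : nat) : 'F_2 := (s2 n %% 2)%:R.

Definition pseries := nat -> 'F_2.

Definition F_tm : pseries := fun n => if n == 0%N then 0 else tm n.

Definition ps_one : pseries := fun n => (n == 0%N)%:R.
Definition ps_X : pseries := fun n => (n == 1%N)%:R.
Definition ps_mul (a b : pseries) : pseries :=
  fun n => \sum_(i < n.+1) a i * b (n - i)%N.
Definition ps_pow (a : pseries) (k : nat) : pseries := iter k (ps_mul a) ps_one.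
(* composition f(g(X)), meaningful when g has zero constant term:
   the coefficient of X^n only involves g^k for k <= n *)
Definition ps_comp (f g : pseries) : pseries :=
  fun n => \sum_(k < n.+1) f k * ps_pow g k n.

Definition is_comp_inverse (f g : pseries) : Prop :=
  g 0%N = 0 /\ (forall n, ps_comp f g n = ps_X n) /\ (forall n, ps_comp g f n = ps_X n).

From mathcomp Require Import all_boot all_algebra.
From mathcomp Require Import ring zify.

(* Over F_2 the Thue-Morse series satisfies (1 + X)^2 F + (1 + X)^3 F^2 + X = 0,
   which is the series form of t(2n) = t(n), t(2n+1) = 1 + t(n).  Composing with
   the inverse G gives the same equation with X and F exchanged, and that equation
   has a unique solution modulo every X^k.  In characteristic 2 it says exactly
   that 1 + X(1 + G) is the cube root of 1 + X.  The polynomials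
   A_j = (1 + X)^3 \prod_(i < j) (1 + X^(8 4^i)) satisfy
   A_j^3 = (1 + X)(1 + X^(8 4^j)), so they agree with that cube root modulo
   X^(8 4^j) while their degree is only about 8 4^j / 3: the coefficients of G
   vanish between these two degrees, a run of length about 4^(j+2) / 3. *)

Set Implicit Arguments.
Unset Strict Implicit.
Unset Printing Implicit Defensive.

Import GRing.Theory.
Local Open Scope ring_scope.

Section Char2.

Variable R : comNzRingType.
Hypothesis pcharR2 : 2 \in [pchar R].

Lemma eq_pchar2 (x y w : R) : x = y + 2%:R * w -> x = y.
Proof. by rewrite (pcharf0 pcharR2) mul0r addr0. Qed.

Lemma exprD2n_pchar2 (x y : R) k : (x + y) ^+ (2 ^ k) = x ^+ (2 ^ k) + y ^+ (2 ^ k).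
Proof.
by apply: exprDn_pchar; rewrite (eq_pnat _ (pcharf_eq pcharR2)) pnatX pnat_id.
Qed.

End Char2.

Definition tm_eqn (R : comNzRingType) (x y : R) : R :=
  (1 + x) ^+ 2 * y + (1 + x) ^+ 3 * y ^+ 2 + x.

Lemma rmorph_tm_eqn (R S : comNzRingType) (f : {rmorphism R -> S}) x y :
  f (tm_eqn x y) = tm_eqn (f x) (f y).
Proof. by rewrite /tm_eqn !(rmorphD, rmorphM, rmorphXn, rmorph1). Qed.

Section XadicDivisibility.

Variable K : fieldType.
Implicit Types p r x y a b : {poly K}.

Lemma dvdp_XnP k p : reflect (forall i, (i < k)%N -> p`_i = 0) ('X^k %| p).
Proof.
apply: (iffP idP) => [/dvdpP [q ->] i ltik | p_low]; first by rewrite coefMXn ltik.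
rewrite -(poly_take_drop k p) dvdp_addr ?dvdp_mull //.
have -> : take_poly k p = 0.
  by apply/polyP => i; rewrite coef_take_poly coef0; case: ifP => // /p_low.
exact: dvdp0.
Qed.

Lemma dvdp_Xn_comp k p r : 'X^k %| p -> 'X^k %| p \Po ('X * r).
Proof.
case/dvdpP => q ->.
by rewrite comp_polyM rmorphXn /= comp_polyX exprMn mulrA mulrAC dvdp_mull.
Qed.

Lemma tm_eqn_subst k x y : 'X^k %| tm_eqn x y -> 'X^k %| y - 'X ->
  'X^k %| tm_eqn x 'X.
Proof.
move=> dvd_eqn dvd_y.
have -> : tm_eqn x 'X =
    tm_eqn x y - (y - 'X) * ((1 + x) ^+ 2 + (1 + x) ^+ 3 * (y + 'X)).
  by rewrite /tm_eqn; ring.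
by rewrite dvdp_sub // dvdp_mulr.
Qed.

Lemma tm_eqnX_uniq k a b : 'X^k %| tm_eqn a 'X -> 'X^k %| tm_eqn b 'X ->
  'X^k %| a - b.
Proof.
move=> dvd_a dvd_b.
have : 'X^k %| tm_eqn a 'X - tm_eqn b 'X by rewrite dvdp_sub.
have -> : tm_eqn a 'X - tm_eqn b 'X = (a - b) *
    (1 + 'X * ('X * ((1 + a) ^+ 2 + (1 + a) * (1 + b) + (1 + b) ^+ 2) + (2%:R + a + b))).
  by rewrite /tm_eqn; ring.
rewrite Gauss_dvdpl // coprimep_expl // coprimep_sym coprimepX.
by rewrite /root !hornerE oner_neq0.
Qed.

End XadicDivisibility.

Section CubeRoots.

Variable K : fieldType.
Hypothesis pcharK2 : 2 \in [pchar K].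

Let pcharKX2 : 2 \in [pchar {poly K}].
Proof. by rewrite pchar_poly. Qed.

Lemma X_tm_eqnX (d : {poly K}) : 'X * tm_eqn d 'X = (1 + 'X * (1 + d)) ^+ 3 + 1 + 'X.
Proof.
apply: (eq_pchar2 pcharKX2 (w := - (('X * (1 + d)) ^+ 2 + 'X * (1 + d) + 1 + 'X))).
by rewrite /tm_eqn; ring.
Qed.

Lemma tm_eqnX_cube_root M (A : {poly K}) : A`_0 = 1 ->
  'X^(M.+1) %| A ^+ 3 - (1 + 'X) -> 'X^M %| tm_eqn (drop_poly 1 A + 1) 'X.
Proof.
move=> A0 dvd_cube.
have take1A : take_poly 1 A = 1.
  by apply/polyP => -[|i]; rewrite coef_take_poly coef1 //= A0.
have AE : 1 + 'X * (1 + (drop_poly 1 A + 1)) = A.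
  rewrite addrCA addrr_pchar2 // addr0 mulrC -[RHS](poly_take_drop 1 A) take1A.
  by rewrite expr1.
have nzX : ('X : {poly K}) != 0 by rewrite polyX_eq0.
rewrite -(dvdp_mul2l _ _ nzX) -exprS X_tm_eqnX AE -addrA.
by rewrite -[1 + 'X](oppr_pchar2 pcharKX2).
Qed.

(* The product approximates (1 + X)^(-8/3), see [tm_cube_approx_cube]. *)
Definition tm_cube_approx j : {poly K} :=
  (1 + 'X) ^+ 3 * \prod_(i < j) (1 + 'X^(8 * 4 ^ i)).

Lemma tm_cube_approx_cube j :
  tm_cube_approx j ^+ 3 = (1 + 'X) * (1 + 'X^(8 * 4 ^ j)).
Proof.
suff prodE : (1 + 'X) ^+ 8 * (\prod_(i < j) (1 + 'X^(8 * 4 ^ i))) ^+ 3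
    = 1 + 'X^(8 * 4 ^ j) :> {poly K}.
  by rewrite -prodE /tm_cube_approx exprMn -exprM mulrA -exprS.
elim: j => [|j IHj].
  by rewrite big_ord0 expr1n mulr1 (exprD2n_pchar2 pcharKX2 _ _ 3) expr1n.
rewrite big_ord_recr /= exprMn mulrA IHj -exprS.
rewrite [_ ^+ 4](exprD2n_pchar2 pcharKX2 _ _ 2) expr1n -exprM.
by rewrite [in RHS]expnSr mulnA.
Qed.

Lemma tm_cube_approx0 j : (tm_cube_approx j)`_0 = 1.
Proof.
rewrite -horner_coef0 /tm_cube_approx hornerM horner_prod big1 => [|i _].
  by rewrite mulr1 horner_exp !hornerE expr1n.
by rewrite !hornerE expr0n muln_eq0 expn_eq0 /= addr0.
Qed.

Lemma size_tm_cube_approx j : (3 * size (tm_cube_approx j) <= 8 * 4 ^ j + 4)%N.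
Proof.
have size_1X n : (size ((1 + 'X^n)%R : {poly K}) <= n.+1)%N.
  by apply: leq_trans (size_polyD _ _) _; rewrite size_poly1 size_polyXn geq_max ltnS leqnn.
have size_3 : (size ((1 + 'X) ^+ 3 : {poly K})%R <= 4)%N.
  by apply: leq_trans (size_poly_exp_leq _ _) _; rewrite addrC -polyC1 size_XaddC.
suff size_prod : (3 * size (\prod_(i < j) (1 + 'X^(8 * 4 ^ i)) : {poly K})%R + 5
    <= 8 * 4 ^ j)%N.
  have := size_polyMleq ((1 + 'X) ^+ 3 : {poly K}) (\prod_(i < j) (1 + 'X^(8 * 4 ^ i))).
  rewrite -/(tm_cube_approx j); lia.
elim: j => [|j IHj]; first by rewrite big_ord0 size_poly1.
rewrite big_ord_recr /= expnS mulnCA; set u := \prod_(i < j) _ in IHj *.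
have size_uX : (size (u * (1 + 'X^(8 * 4 ^ j)%N))%R <= size u + 8 * 4 ^ j)%N.
  apply: leq_trans (size_polyMleq _ _) _.
  by rewrite -subn1 leq_subLR add1n -addnS leq_add2l size_1X.
apply: leq_trans (_ : 3 * (size u + 8 * 4 ^ j) + 5 <= _)%N; last lia.
by rewrite leq_add2r leq_mul2l size_uX orbT.
Qed.

Lemma coef_tm_cube_approx_drop j i : (8 * 4 ^ j < 3 * i)%N ->
  (drop_poly 1 (tm_cube_approx j) + 1)`_i = 0.
Proof.
case: i => [|i] large_i; first by rewrite muln0 in large_i.
rewrite coefD coef_drop_poly coef1 /= addr0 nth_default //.
rewrite -(leq_pmul2l (_ : 0 < 3)%N) //.
by apply: leq_trans (size_tm_cube_approx j) _; lia.
Qed.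

Lemma tm_eqnX_tm_cube_approx j :
  'X^((8 * 4 ^ j).-1) %| tm_eqn (drop_poly 1 (tm_cube_approx j) + 1) 'X.
Proof.
apply: tm_eqnX_cube_root; first exact: tm_cube_approx0.
rewrite prednK ?muln_gt0 ?expn_gt0 // tm_cube_approx_cube mulrDr mulr1.
by rewrite addrAC subrr add0r dvdp_mull.
Qed.

End CubeRoots.

Lemma s2_aux0 f : s2_aux f 0 = 0%N.
Proof. by elim: f => //= f ->. Qed.

Lemma s2_aux_fuel f g n : (n <= f)%N -> (n <= g)%N -> s2_aux f n = s2_aux g n.
Proof.
elim: f g n => [|f IHf] g [|n] n_le_f n_le_g; rewrite ?s2_aux0 //.
case: g n_le_g => // g n_le_g /=.
by congr (_ + _)%N; apply: IHf; lia.
Qed.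

Lemma s2E n : s2 n = (n %% 2 + s2 (n %/ 2))%N.
Proof.
case: n => [//|n]; rewrite [LHS]/s2 [s2_aux _ _]/=.
by congr (_ + _)%N; apply: s2_aux_fuel; lia.
Qed.

Lemma s2_double n : s2 n.*2 = s2 n.
Proof. by rewrite s2E -muln2 modnMl mulnK. Qed.

Lemma s2_doubleS n : s2 n.*2.+1 = (s2 n).+1.
Proof.
have mod2 : (n.*2.+1 %% 2 = 1)%N by lia.
have div2 : (n.*2.+1 %/ 2 = n)%N by lia.
by rewrite s2E mod2 div2.
Qed.

Lemma tmE n : tm n = (s2 n)%:R.
Proof. exact: Zp_nat_mod. Qed.

Lemma tm_double n : tm n.*2 = tm n.
Proof. by rewrite !tmE s2_double. Qed.

Lemma tm_doubleS n : tm n.*2.+1 = 1 + tm n.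
Proof. by rewrite !tmE s2_doubleS mulrS. Qed.

Lemma pchar_F2 : 2 \in [pchar 'F_2].
Proof. exact: pchar_Fp. Qed.

Lemma pchar_F2X : 2 \in [pchar {poly 'F_2}].
Proof. by rewrite pchar_poly pchar_F2. Qed.

Lemma sqr_comp_X2 (p : {poly 'F_2}) : p ^+ 2 = p \Po 'X^2.
Proof.
elim/poly_ind: p => [|p c IHp]; first by rewrite comp_poly0 expr0n.
rewrite [_ ^+ 2](exprD2n_pchar2 pchar_F2X _ _ 1) exprMn IHp -rmorphXn /=.
have -> : c ^+ 2 = c by case: c => [[|[|]]] //= ?; apply/val_inj.
by rewrite comp_polyD comp_polyM comp_polyX comp_polyC.
Qed.

Definition ps_trunc n (a : pseries) : {poly 'F_2} := \poly_(i < n.+1) a i.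

Lemma coef_ps_trunc n a i : (ps_trunc n a)`_i = if (i <= n)%N then a i else 0.
Proof. by rewrite coef_poly ltnS. Qed.

Lemma ps_truncXE n g : g 0%N = 0 -> ps_trunc n g = 'X * \poly_(i < n) g i.+1.
Proof.
move=> g0; apply/polyP => -[|i]; rewrite coefXM coef_ps_trunc ?g0 //.
by rewrite coef_poly.
Qed.

Lemma coef_ps_pow n g k i : (i <= n)%N -> ps_pow g k i = (ps_trunc n g ^+ k)`_i.
Proof.
elim: k i => [|k IHk] i le_in; first by rewrite expr0 coef1.
rewrite exprS /ps_pow iterS -/(ps_pow g k) coefM /ps_mul.
apply: eq_bigr => -[j /= lt_ji]; rewrite coef_ps_trunc ifT ?IHk //; lia.
Qed.

Lemma coef_ps_comp n f g i : g 0%N = 0 -> (i <= n)%N ->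
  ps_comp f g i = (ps_trunc n f \Po ps_trunc n g)`_i.
Proof.
move=> g0 le_in.
rewrite [ps_trunc n f]/ps_trunc poly_def linear_sum coef_sum.
under eq_bigr => k _ do rewrite linearZ /= rmorphXn /= comp_polyX coefZ.
rewrite /ps_comp -(big_mkord xpredT (fun k => f k * ps_pow g k i)).
rewrite -(big_mkord xpredT (fun k => f k * (ps_trunc n g ^+ k)`_i)).
rewrite [RHS](big_cat_nat (n := i.+1)) //= ?ltnS // [X in _ + X]big1_seq ?addr0.
  by apply: eq_big_nat => k _; rewrite (coef_ps_pow _ _ le_in).
move=> k /andP [_]; rewrite mem_iota => /andP [lt_ik _].
by rewrite ps_truncXE // exprMn coefXnM lt_ik mulr0.
Qed.

Lemma coef_ps_trunc_tm n i : (i <= n)%N -> (ps_trunc n F_tm)`_i = tm i.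
Proof. by rewrite coef_ps_trunc /F_tm => ->; case: i. Qed.

Lemma coef_tm_series_rec n i : (i <= n)%N ->
  (ps_trunc n F_tm + (1 + 'X) * (ps_trunc n F_tm \Po 'X^2))`_i = (odd i)%:R.
Proof.
move=> le_in; rewrite mulrDl mul1r !coefD coefXM !coef_comp_poly_Xn // !dvdn2 !divn2.
have [[m im]|[m im]] : (exists m, i = m.*2) \/ (exists m, i = m.*2.+1).
  by rewrite -[i]odd_double_half; case: (odd i); [right|left]; exists i./2.
- rewrite im odd_double doubleK /= !coef_ps_trunc_tm ?tm_double; try lia.
  rewrite [X in _ + (_ + X)](_ : _ = 0) ?addr0 ?addrr_pchar2 ?pchar_F2 //.
  by case: m {im le_in} => [|m] //=; rewrite odd_double.
- rewrite im /= odd_double doubleK /= coef_ps_trunc_tm ?tm_doubleS; last lia.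
  rewrite coef_ps_trunc_tm; last lia.
  by rewrite add0r -addrA addrr_pchar2 ?pchar_F2 // addr0.
Qed.

Lemma tm_eqn_ps_trunc n : 'X^(n.+1) %| tm_eqn 'X (ps_trunc n F_tm).
Proof.
set T := ps_trunc n F_tm.
have -> : tm_eqn 'X T = (1 + 'X) ^+ 2 * (T + (1 + 'X) * T ^+ 2) + 'X.
  by rewrite /tm_eqn; ring.
rewrite [(1 + 'X) ^+ 2](exprD2n_pchar2 pchar_F2X _ _ 1) expr1n -[(2 ^ 1)%N]/2%N.
rewrite sqr_comp_X2.
have := @coef_tm_series_rec n; rewrite -/T; move: (T + _) => H coefH.
apply/dvdp_XnP => i lt_in; rewrite mulrDl mul1r !coefD coefXnM coefX coefH //.
case: i lt_in => [|[|i]] lt_in; rewrite ?addr0 ?addrr_pchar2 ?pchar_F2 //.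
by rewrite !subSS subn0 coefH /= ?negbK ?addrr_pchar2 ?pchar_F2 //; lia.
Qed.

Lemma tm_eqn_comp_inverse c : is_comp_inverse F_tm c ->
  forall n, 'X^(n.+1) %| tm_eqn (ps_trunc n c) 'X.
Proof.
case=> c0 [F_c _] n; set G := ps_trunc n c.
have G_X : G = 'X * \poly_(i < n) c i.+1 := ps_truncXE n c0.
apply: (@tm_eqn_subst _ _ _ (ps_trunc n F_tm \Po G)).
  have := dvdp_Xn_comp (\poly_(i < n) c i.+1) (tm_eqn_ps_trunc n).
  by rewrite -G_X (rmorph_tm_eqn (comp_poly G)) /= comp_polyX.
apply/dvdp_XnP => i lt_in.
by rewrite coefB -coef_ps_comp // F_c /ps_X coefX subrr.
Qed.

Lemma tm_comp_inverse_coef_eq0 c j i : is_comp_inverse F_tm c ->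
  (8 * 4 ^ j < 3 * i)%N -> (i.+2 <= 8 * 4 ^ j)%N -> c i = 0.
Proof.
move=> inv_c large_i small_i; set M := (8 * 4 ^ j).-1.
have dvd_c : 'X^M %| tm_eqn (ps_trunc M c) 'X.
  exact: dvdp_trans (dvdp_exp2l _ (leqnSn M)) (tm_eqn_comp_inverse inv_c M).
have /dvdp_XnP/(_ i) := tm_eqnX_uniq dvd_c (tm_eqnX_tm_cube_approx pchar_F2 j).
rewrite coefB coef_ps_trunc coef_tm_cube_approx_drop // subr0 ifT; last lia.
by apply; lia.
Qed.

Theorem mainTheorem8 (c : nat -> 'F_2) :
  is_comp_inverse F_tm c ->
  (forall m : nat, (0 < m)%N ->
     forall N : nat, exists i : nat, (N <= i)%N /\
       forall j : nat, (j < (4 ^ m - 1) %/ 3)%N -> c (i + j)%N = 0)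
  /\
  (forall len : nat, exists i : nat, forall j : nat, (j < len)%N -> c (i + j)%N = 0).
Proof.
move=> inv_c.
have blocks m (N : nat) : exists i, (N <= i)%N /\
    forall k, (k < (4 ^ m - 1) %/ 3)%N -> c (i + k)%N = 0.
  have := ltn_expl (N + m) (isT : (1 < 4)%N).
  have := leq_pexp2l (isT : (0 < 4)%N) (leq_addl N m).
  exists (8 * 4 ^ (N + m) - 1 - (4 ^ m - 1) %/ 3)%N; split; first lia.
  by move=> k lt_k; apply: (tm_comp_inverse_coef_eq0 (j := N + m) inv_c); lia.
split=> [m _ | len]; first exact: blocks.
have [i [_ zeros]] := blocks len.+1 0%N.
exists i => k lt_k; apply: zeros.
by have := ltn_expl len (isT : (1 < 4)%N); rewrite expnS; lia.
Qed.
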